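(* For all $\alpha\in[-1,1]$, $1-3P(\alpha)\ge\frac{1-\alpha}{2}$, where $$P(\alpha)=\frac19+\frac{\arcsin\alpha+\arcsin\frac{\alpha}{2}}{4\pi}+\frac{(\arcsin\alpha)^2-(\arcsin\frac{\alpha}{2})^2}{4\pi^2}.$$ *)

From Stdlib Require Import Reals Lra.
Open Scope R_scope.

Definition P (a : R) : R :=
  1/9 + (asin a + asin (a/2)) / (4*PI)
      + ((asin a)^2 - (asin (a/2))^2) / (4*PI^2).

From Stdlib Require Import Reals Lra Psatz.
Open Scope R_scope.

(* Write x = arcsin a and y = arcsin (a/2).  Clearing the denominator 4 PI^2,
   the inequality becomes 3 (x + PI/2)^2 <= 4 PI^2 (1/6 + a/2) + 3 (PI/2 - y)^2.
   For a <= 0 we use cos (x + PI/2) = -a with the quartic Taylor bound of cos, and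
   bound y from below by the tangent of sin at -PI/6; for a >= 0 we use
   cos (PI/2 - x) = a with the quadratic Taylor bound, and bound y from above by
   Jordan's chord inequality sin y >= 3 y / PI on [0, PI/6].  In both cases what
   remains is a polynomial inequality in PI, checked with PI in [3.14, 3.15]. *)

Lemma PI_bounds : 314/100 < PI < 315/100.
Proof.
  destruct (PI_2_3_7_ineq 1) as [Hlo Hhi].
  unfold tg_alt, PI_2_3_7_tg, Ratan_seq in Hlo, Hhi; simpl in Hlo, Hhi.
  lra.
Qed.

Lemma asin_le (u v : R) : -1 <= u -> u <= v -> v <= 1 -> asin u <= asin v.
Proof.
  intros Hu Huv Hv.
  destruct (asin_bound u), (asin_bound v).
  apply Rnot_lt_le; intros Hlt.
  assert (Hsin : sin (asin v) < sin (asin u)) by (apply sin_increasing_1; lra).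
  rewrite !sin_asin in Hsin by lra.
  lra.
Qed.

Lemma asin_half_bound (a : R) : -1 <= a <= 1 -> - (PI/6) <= asin (a/2) <= PI/6.
Proof.
  intros Ha.
  assert (Hhalf : asin (1/2) = PI/6).
  { rewrite <- sin_PI6. apply asin_sin. pose proof PI_RGT_0. lra. }
  split.
  - rewrite <- Hhalf, <- asin_opp. apply asin_le; lra.
  - rewrite <- Hhalf. apply asin_le; lra.
Qed.

Lemma MVT_sin_sub_linear (k u v : R) : u < v ->
  exists c, (sin v - k * v) - (sin u - k * u) = (cos c - k) * (v - u) /\ u < c < v.
Proof.
  intros Huv.
  apply (MVT_cor2 (fun z => sin z - k * z) (fun z => cos z - k) u v Huv).
  intros c _.
  replace (cos c - k) with (cos c - k * 1) by ring.
  apply (derivable_pt_lim_minus sin (fun z => k * z)).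
  - apply derivable_pt_lim_sin.
  - apply (derivable_pt_lim_scal id k c 1), derivable_pt_lim_id.
Qed.

Lemma cos_ge_sqrt3_half (c : R) : - (PI/6) <= c <= PI/6 -> sqrt 3 / 2 <= cos c.
Proof.
  intros Hc. pose proof PI_bounds.
  rewrite <- cos_PI6.
  destruct (Rle_dec 0 c).
  - apply cos_decr_1; lra.
  - rewrite <- (cos_neg c). apply cos_decr_1; lra.
Qed.

Lemma sin_ge_tangent_neg_PI6 (y : R) :
  - (PI/6) <= y <= 0 -> -1/2 + sqrt 3 / 2 * (y + PI/6) <= sin y.
Proof.
  intros Hy. pose proof PI_bounds.
  destruct (Req_dec y (-(PI/6))) as [->|Hne].
  - rewrite sin_neg, sin_PI6. lra.
  - destruct (MVT_sin_sub_linear (sqrt 3 / 2) (-(PI/6)) y) as [c [Hmvt Hc]]; [lra|].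
    rewrite sin_neg, sin_PI6 in Hmvt.
    assert (sqrt 3 / 2 <= cos c) by (apply cos_ge_sqrt3_half; lra).
    nra.
Qed.

(* Two mean value points c1 < c2 on either side of y; cos c2 <= cos c1 rules out
   sin y < 3 y / PI, since then the slopes on both sides would have the wrong order. *)
Lemma sin_ge_chord_PI6 (y : R) : 0 <= y <= PI/6 -> 3 / PI * y <= sin y.
Proof.
  intros Hy. pose proof PI_bounds.
  assert (Hend : 3 / PI * (PI/6) = 1/2) by (field; lra).
  destruct (Req_dec y 0) as [->|Hne0]; [rewrite sin_0; lra|].
  destruct (Req_dec y (PI/6)) as [->|Hne1]; [rewrite sin_PI6; lra|].
  destruct (MVT_sin_sub_linear (3/PI) 0 y) as [c1 [H1 Hc1]]; [lra|].
  destruct (MVT_sin_sub_linear (3/PI) y (PI/6)) as [c2 [H2 Hc2]]; [lra|].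
  rewrite sin_0 in H1. rewrite sin_PI6 in H2.
  assert (cos c2 <= cos c1) by (apply cos_decr_1; lra).
  apply Rnot_lt_le; intros Hlt.
  assert (cos c1 - 3/PI < 0) by nra.
  nra.
Qed.

Lemma cos_le_taylor4 (t : R) : 0 <= t <= PI/2 -> cos t <= 1 - t^2/2 + t^4/24.
Proof.
  intros Ht. pose proof PI_bounds.
  destruct (cos_bound t 0 ltac:(lra) ltac:(lra)) as [_ Hhi].
  unfold cos_approx, cos_term in Hhi; simpl in Hhi.
  assert (0 <= t^2 <= 4) by nra.
  lra.
Qed.

Lemma cos_ge_taylor2 (t : R) : 0 <= t <= PI/2 -> 1 - t^2/2 <= cos t.
Proof.
  intros Ht. pose proof PI_bounds.
  destruct (cos_bound t 0 ltac:(lra) ltac:(lra)) as [Hlo _].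
  unfold cos_approx, cos_term in Hlo; simpl in Hlo.
  assert (0 <= t^2 <= 4) by nra.
  lra.
Qed.

Definition P_gap (a : R) : R :=
  4 * PI^2 * (1/6 + a/2) + 3 * (PI/2 - asin (a/2))^2 - 3 * (asin a + PI/2)^2.

Lemma one_sub_3P_sub_eq (a : R) : 1 - 3 * P a - (1 - a) / 2 = P_gap a / (4 * PI^2).
Proof. unfold P, P_gap. pose proof PI_RGT_0. field. lra. Qed.

Lemma P_gap_ge0_nonpos (a : R) : -1 <= a <= 0 -> 0 <= P_gap a.
Proof.
  intros Ha. pose proof PI_bounds. unfold P_gap.
  set (th := asin a + PI/2). set (L := PI/2 - asin (a/2)). set (s := 1 + a).
  assert (Hth : 0 <= th <= PI/2).
  { pose proof (asin_le a 0) as Hx0. rewrite asin_0 in Hx0.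
    pose proof (asin_bound a). unfold th. lra. }
  assert (Hs : th^2/2 - th^4/24 <= s).
  { assert (cos th = - a).
    { unfold th. rewrite cos_plus, cos_PI2, sin_PI2, sin_asin by lra. ring. }
    pose proof (cos_le_taylor4 th Hth). unfold s. lra. }
  pose proof Rlt_sqrt3_0 as Hw0.
  set (w := sqrt 3) in *.
  assert (Hw2 : w * w = 3) by (apply sqrt_sqrt; lra).
  assert (Hw : 173/100 <= w <= 174/100) by (split; apply Rnot_lt_le; intro; nra).
  assert (HwL : 2 * PI * w / 3 - s <= w * L).
  { pose proof (asin_half_bound a ltac:(lra)).
    pose proof (asin_le (a/2) 0) as Hy0. rewrite asin_0 in Hy0.
    pose proof (sin_ge_tangent_neg_PI6 (asin (a/2)) ltac:(lra)) as Htan.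
    rewrite sin_asin in Htan by lra.
    unfold L, s, w in *. lra. }
  assert (HL2 : (2 * PI * w / 3 - s)^2 <= 3 * L^2).
  { assert (0 <= 2 * PI * w / 3 - s) by (unfold s; nra). nra. }
  set (K := 2 * PI^2 - 4 * PI * w / 3).
  assert (HK : 11 <= K) by (unfold K; nra).
  assert (Hth2 : th^2 <= 25/10) by nra.
  assert (Hquad : 3 * th^2 <= K * (th^2/2 - th^4/24)).
  { assert (3 <= K * (1/2 - th^2/24)) by nra.
    replace (K * (th^2/2 - th^4/24)) with (th^2 * (K * (1/2 - th^2/24))) by field.
    nra. }
  assert (K * (th^2/2 - th^4/24) <= K * s) by nra.
  unfold K, s in *. nra.
Qed.

Lemma P_gap_ge0_nonneg (a : R) : 0 <= a <= 1 -> 0 <= P_gap a.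
Proof.
  intros Ha. pose proof PI_bounds. unfold P_gap.
  set (r := PI/2 - asin a). set (d := 1 - a).
  assert (Hr : 0 <= r <= PI/2).
  { pose proof (asin_le 0 a) as Hx0. rewrite asin_0 in Hx0.
    pose proof (asin_bound a). unfold r. lra. }
  assert (Hd : d <= r^2/2).
  { assert (cos r = a).
    { unfold r. rewrite cos_minus, cos_PI2, sin_PI2, sin_asin by lra. ring. }
    pose proof (cos_ge_taylor2 r Hr). unfold d. lra. }
  assert (HL : PI * (1/2 - a/6) <= PI/2 - asin (a/2)).
  { pose proof (asin_half_bound a ltac:(lra)).
    pose proof (asin_le 0 (a/2)) as Hy0. rewrite asin_0 in Hy0.
    pose proof (sin_ge_chord_PI6 (asin (a/2)) ltac:(lra)) as Hchord.
    rewrite sin_asin in Hchord by lra.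
    assert (3 * asin (a/2) <= PI * (a/2)).
    { replace (3 * asin (a/2)) with (PI * (3 / PI * asin (a/2))) by (field; lra).
      nra. }
    lra. }
  assert (HL2 : 3 * (PI * (1/2 - a/6))^2 <= 3 * (PI/2 - asin (a/2))^2).
  { assert (0 <= PI * (1/2 - a/6)) by nra. nra. }
  replace (asin a + PI/2) with (PI - r) by (unfold r; lra).
  assert (Ha_d : a = 1 - d) by (unfold d; ring).
  rewrite Ha_d in HL2 |- *.
  assert (Hlin : 5/6 * PI^2 * r^2 + 3 * r^2 <= 6 * PI * r).
  { assert (5/6 * PI^2 * r + 3 * r <= 6 * PI) by nra. nra. }
  assert (0 <= d) by (unfold d; lra).
  nra.
Qed.

Theorem mainTheorem10 (a : R) (ha : -1 <= a <= 1) :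
  1 - 3 * P a >= (1 - a) / 2.
Proof.
  assert (Hgap : 0 <= P_gap a).
  { destruct (Rle_dec a 0).
    - apply P_gap_ge0_nonpos; lra.
    - apply P_gap_ge0_nonneg; lra. }
  assert (0 <= 1 - 3 * P a - (1 - a) / 2).
  { rewrite one_sub_3P_sub_eq. pose proof PI_RGT_0.
    apply Rmult_le_pos; [lra|]. apply Rlt_le, Rinv_0_lt_compat. nra. }
  lra.
Qed.
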